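(* Let $w, w'$ be words over $\Omega$ of lengths $k > k'$. Then $h_w(n) - q^{k-k'} h_{w'}(n-k+k') \le 0$ for all integers $n \le k+1$.
   Context: Let $\Omega$ be a finite alphabet with $q\ge2$ letters; a word of length $k$ is written $w = w_k\dots w_1$. For any integer $n$, $h_w(n)$ is the number of strings of length $n$ over $\Omega$ whose last $k$ characters form $w$ and which contain $w$ as a block of $k$ consecutive characters nowhere else; in particular $h_w(n) = 0$ for all $n < k$ (including negative $n$) and $h_w(k)=1$. *)

From HB Require Import structures.
From mathcomp Require Import all_boot all_order all_algebra.
Set Implicit Arguments. Unset Strict Implicit. Unset Printing Implicit Defensive.
Import Order.TTheory GRing.Theory Num.Theory.

(* A word/string is a seq over the finite alphabet T, written left to right;
   the word w = w_k ... w_1 is the seq [:: w_k; ...; w_1].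
   [occurs_at w s i]: w appears in s as the block of size w consecutive
   characters starting at (0-based) position i. *)
Definition occurs_at (T : eqType) (w s : seq T) (i : nat) : bool :=
  (i + size w <= size s) && (take (size w) (drop i s) == w).

Definition ends_only_with (T : eqType) (w s : seq T) : bool :=
  occurs_at w s (size s - size w) &&
  [forall i : 'I_(size s).+1, occurs_at w s i ==> (val i == size s - size w)].

Definition h (T : finType) (w : seq T) (n : int) : nat :=
  match n with
  | Posz m => #|[set s : m.-tuple T | ends_only_with w s]|
  | Negz _ => 0
  end.

From HB Require Import structures.
From mathcomp Require Import all_boot all_order all_algebra.
From mathcomp Require Import zify.
Import Order.TTheory GRing.Theory Num.Theory.

(* Only n = k and n = k + 1 matter, as h_w vanishes below k.  At n = k both
   counts are 1 (the word itself).  At n = k + 1 a string counted by h_w is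
   determined by its first letter, so h_w(k+1) <= q <= q^(k-k'), while
   h_w'(k'+1) >= 1: prefix w' with a letter different from its first one. *)

Section EndsOnlyWith.

Variables (T : finType) (w : seq T).

Lemma h_lt_size (m : nat) : (m < size w)%N -> h w m = 0%N.
Proof.
move=> lt_m_w; apply/eqP; rewrite cards_eq0; apply/eqP/setP => s.
rewrite !inE /ends_only_with /occurs_at size_tuple.
by have -> : (m - size w + size w <= m)%N = false by lia.
Qed.

Lemma h_size : h w (size w) = 1%N.
Proof.
rewrite /h -(cards1 (in_tuple w)); apply: eq_card => s.
rewrite !inE /ends_only_with /occurs_at size_tuple subnn drop0 leqnn /=.
rewrite take_oversize ?size_tuple //.
apply/idP/eqP => [/andP[/eqP s_w _] | ->]; first exact/val_inj.
rewrite eqxx /=.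
by apply/forallP => i; apply/implyP => /andP[le_i _]; apply/eqP; lia.
Qed.

Lemma h_succ_size_le_card : (h w (size w).+1 <= #|T|)%N.
Proof.
set A := [set s : (size w).+1.-tuple T | ends_only_with w s].
suff thead_inj : {in A &, injective (fun s : (size w).+1.-tuple T => thead s)}.
  by rewrite /h -(card_in_imset thead_inj) max_card.
have behead_w (s : (size w).+1.-tuple T) : s \in A -> behead s = w.
  rewrite inE /ends_only_with /occurs_at size_tuple.
  have -> : ((size w).+1 - size w = 1)%N by lia.
  by rewrite drop1 take_oversize ?size_behead ?size_tuple // => /andP[/andP[_ /eqP]].
move=> s1 s2 s1A s2A eq_hd; apply/val_inj.
by rewrite /= (tuple_eta s1) (tuple_eta s2) /= eq_hd -!/(behead _) !behead_w.
Qed.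

Lemma h_succ_size_gt0 : (1 < #|T|)%N -> (0 < size w)%N -> (0 < h w (size w).+1)%N.
Proof.
case: w => [//|x t] card_T _.
have /card_gt0P[a] : (0 < #|predC1 x|)%N by rewrite cardC1; lia.
rewrite !inE => a_neq_x.
rewrite /h card_gt0; apply/set0Pn; exists (in_tuple (a :: x :: t)).
rewrite inE /ends_only_with /occurs_at /=.
have -> : ((size t).+2 - (size t).+1 = 1)%N by lia.
rewrite drop1 /= take_size eqxx leqnn /=.
apply/forallP => -[[|[|i]] lt_i] /=; apply/implyP => /andP[// le_i].
- by rewrite take_cons => /eqP[a_x]; rewrite a_x eqxx in a_neq_x.
- by move: le_i; rewrite /= !addSn ltnS; lia.
Qed.

End EndsOnlyWith.

Local Open Scope ring_scope.

Theorem lemma5p1 (T : finType) (hq : (2 <= #|T|)%N) (w w' : seq T)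
  (hw' : (0 < size w')%N) (hk : (size w' < size w)%N) (n : int)
  (hn : n <= (size w)%:Z + 1) :
  (h w n)%:Z - ((#|T| ^ (size w - size w'))%N)%:Z
      * (h w' (n - (size w)%:Z + (size w')%:Z))%:Z <= 0.
Proof.
rewrite subr_le0.
case: n hn => [m|m] hn; last by rewrite /= mulr_ge0.
have [lt_m_w|le_w_m] := ltnP m (size w); first by rewrite h_lt_size // mulr_ge0.
have -> : Posz m - (size w)%:Z + (size w')%:Z = Posz (m - size w + size w')%N.
  by rewrite -[X in _ = X]/(Posz _); lia.
rewrite -PoszM lez_nat.
have pow_gt0 : (0 < #|T| ^ (size w - size w'))%N by rewrite expn_gt0; lia.
have /orP[/eqP-> | /eqP->] : (m == size w) || (m == (size w).+1) by lia.
- have -> : (size w - size w + size w' = size w')%N by lia.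
  by rewrite !h_size muln1.
- have -> : ((size w).+1 - size w + size w' = (size w').+1)%N by lia.
  apply: leq_trans (h_succ_size_le_card T w) _.
  apply: (@leq_trans (#|T| ^ (size w - size w'))).
    by rewrite -{1}(expn1 #|T|) leq_exp2l //; lia.
  by rewrite leq_pmulr // h_succ_size_gt0.
Qed.
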